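(* Let $F$ be a field with $\mathrm{char}\,F\ne2$ and let $A$ be an involutive $F$-algebra. Then $A$ is reversible if and only if every $3$-dimensional subalgebra of $A$ is commutative.
   Context: Algebras are unital, with bilinear not necessarily associative multiplication. $A$ is involutive if there is an anti-automorphism $a\mapsto\bar a$ with $\bar{\bar a}=a$, $a+\bar a\in F1$ and $a\bar a\in F1$ for all $a\in A$. $A$ is reversible if $ab=0$ implies $ba=0$ for all $a,b\in A$. *)

(* A (possibly infinite-dimensional) unital, not necessarily
   associative F-algebra is given by an F-module V, a bilinear product m and a
   unit element e. *)
From HB Require Import structures.
From mathcomp Require Import all_boot all_order all_algebra.
Set Implicit Arguments. Unset Strict Implicit. Unset Printing Implicit Defensive.
Import Order.TTheory GRing.Theory Num.Theory.
Local Open Scope ring_scope.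

Section AlgDefs.
Variables (F : fieldType) (V : lmodType F).

Definition bilinear_mul (m : V -> V -> V) : Prop :=
  (forall (a : F) (x y z : V), m (a *: x + y) z = a *: m x z + m y z) /\
  (forall (a : F) (x y z : V), m z (a *: x + y) = a *: m z x + m z y).

Definition unit_elt (m : V -> V -> V) (e : V) : Prop :=
  forall x : V, m e x = x /\ m x e = x.

Definition involutive_alg (m : V -> V -> V) (e : V) (bar : V -> V) : Prop :=
  [/\ (forall (a : F) (x y : V), bar (a *: x + y) = a *: bar x + bar y),
      (forall x y : V, bar (m x y) = m (bar y) (bar x)),
      (forall x : V, bar (bar x) = x),
      (forall x : V, exists t : F, x + bar x = t *: e) &
      (forall x : V, exists t : F, m x (bar x) = t *: e)].

Definition reversible (m : V -> V -> V) : Prop :=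
  forall a b : V, m a b = 0 -> m b a = 0.

Definition lin_indep3 (u1 u2 u3 : V) : Prop :=
  forall a b c : F, a *: u1 + b *: u2 + c *: u3 = 0 -> [/\ a = 0, b = 0 & c = 0].

Definition span3 (u1 u2 u3 : V) (x : V) : Prop :=
  exists a b c : F, x = a *: u1 + b *: u2 + c *: u3.

Definition subalgebra3 (m : V -> V -> V) (e u1 u2 u3 : V) : Prop :=
  [/\ lin_indep3 u1 u2 u3,
      span3 u1 u2 u3 e &
      (forall x y : V, span3 u1 u2 u3 x -> span3 u1 u2 u3 y ->
                       span3 u1 u2 u3 (m x y))].

Definition commutative_on (m : V -> V -> V) (P : V -> Prop) : Prop :=
  forall x y : V, P x -> P y -> m x y = m y x.

End AlgDefs.

From HB Require Import structures.
From mathcomp Require Import all_boot all_order all_algebra.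
From mathcomp Require Import ring.
From Stdlib Require Import Classical.
Import Order.TTheory GRing.Theory Num.Theory.
Local Open Scope ring_scope.
Set Implicit Arguments. Unset Strict Implicit. Unset Printing Implicit Defensive.

(* Every element x of an involutive algebra is quadratic: x^2 = t x - n with
   t 1 = x + bar x and n 1 = x bar x.  Hence if ab = 0 with 1, a, b independent,
   their span is a 3-dimensional subalgebra, so ba = ab = 0; if 1, a, b are
   dependent, a and b commute anyway.  Conversely, a 3-dimensional subalgebra has
   a basis 1, x, y with x, y pure (replace x by x - bar x, using char F <> 2).
   For pure x, y we have yx = bar (xy), so if xy = al + be x + ga y then
   yx = al - be x - ga y, and commutativity means be = ga = 0.  When ga = 0,
   reversibility applied to a few explicit zero products of the multiplication
   table forces be = 0; the general case reduces to this one by replacing x with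
   be x + ga y, whose product with y has no y-component. *)

Section Comb3.
Variables (F : fieldType) (V : lmodType F).

Definition comb3 (u1 u2 u3 : V) (a b c : F) : V := a *: u1 + b *: u2 + c *: u3.

Lemma span3P (u1 u2 u3 z : V) :
  span3 u1 u2 u3 z -> exists a b c, z = comb3 u1 u2 u3 a b c.
Proof. by []. Qed.

Lemma span3_comb3 (u1 u2 u3 : V) a b c : span3 u1 u2 u3 (comb3 u1 u2 u3 a b c).
Proof. by exists a, b, c. Qed.

Lemma comb3D (u1 u2 u3 : V) a b c a' b' c' :
  comb3 u1 u2 u3 a b c + comb3 u1 u2 u3 a' b' c' =
  comb3 u1 u2 u3 (a + a') (b + b') (c + c').
Proof. by rewrite /comb3 !scalerDl addrACA [in LHS](addrACA (a *: u1)). Qed.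

Lemma comb3Z (u1 u2 u3 : V) k a b c :
  k *: comb3 u1 u2 u3 a b c = comb3 u1 u2 u3 (k * a) (k * b) (k * c).
Proof. by rewrite /comb3 !scalerDr !scalerA. Qed.

Lemma comb3N (u1 u2 u3 : V) a b c :
  - comb3 u1 u2 u3 a b c = comb3 u1 u2 u3 (- a) (- b) (- c).
Proof. by rewrite /comb3 !opprD !scaleNr. Qed.

Lemma comb30 (u1 u2 u3 : V) : comb3 u1 u2 u3 0 0 0 = 0.
Proof. by rewrite /comb3 !scale0r !addr0. Qed.

Lemma comb3_100 (u1 u2 u3 : V) : comb3 u1 u2 u3 1 0 0 = u1.
Proof. by rewrite /comb3 scale1r !scale0r !addr0. Qed.

Lemma comb3_010 (u1 u2 u3 : V) : comb3 u1 u2 u3 0 1 0 = u2.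
Proof. by rewrite /comb3 scale1r !scale0r add0r addr0. Qed.

Lemma comb3_001 (u1 u2 u3 : V) : comb3 u1 u2 u3 0 0 1 = u3.
Proof. by rewrite /comb3 scale1r !scale0r !add0r. Qed.

Lemma comb3_subst (u1 u2 u3 v1 v2 v3 : V) a1 b1 c1 a2 b2 c2 a3 b3 c3 a b c :
  v1 = comb3 u1 u2 u3 a1 b1 c1 -> v2 = comb3 u1 u2 u3 a2 b2 c2 ->
  v3 = comb3 u1 u2 u3 a3 b3 c3 ->
  comb3 v1 v2 v3 a b c =
  comb3 u1 u2 u3 (a * a1 + b * a2 + c * a3) (a * b1 + b * b2 + c * b3)
                 (a * c1 + b * c2 + c * c3).
Proof. by move=> -> -> ->; rewrite {1}/comb3 !comb3Z !comb3D. Qed.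

Lemma span3_1 (u1 u2 u3 : V) : span3 u1 u2 u3 u1.
Proof. by exists 1, 0, 0; rewrite -/(comb3 _ _ _ _ _ _) comb3_100. Qed.

Lemma span3_2 (u1 u2 u3 : V) : span3 u1 u2 u3 u2.
Proof. by exists 0, 1, 0; rewrite -/(comb3 _ _ _ _ _ _) comb3_010. Qed.

Lemma span3_3 (u1 u2 u3 : V) : span3 u1 u2 u3 u3.
Proof. by exists 0, 0, 1; rewrite -/(comb3 _ _ _ _ _ _) comb3_001. Qed.

Lemma span3_trans (u1 u2 u3 v1 v2 v3 : V) z :
  span3 u1 u2 u3 v1 -> span3 u1 u2 u3 v2 -> span3 u1 u2 u3 v3 ->
  span3 v1 v2 v3 z -> span3 u1 u2 u3 z.
Proof.
move=> /span3P[a1 [b1 [c1 h1]]] /span3P[a2 [b2 [c2 h2]]] /span3P[a3 [b3 [c3 h3]]].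
by move=> /span3P[a [b [c ->]]]; rewrite (comb3_subst _ _ _ h1 h2 h3); apply: span3_comb3.
Qed.

Lemma span3_perm12 (u1 u2 u3 z : V) : span3 u1 u2 u3 z -> span3 u2 u1 u3 z.
Proof. exact: span3_trans (span3_2 _ _ _) (span3_1 _ _ _) (span3_3 _ _ _). Qed.

Lemma span3_perm13 (u1 u2 u3 z : V) : span3 u1 u2 u3 z -> span3 u3 u2 u1 z.
Proof. exact: span3_trans (span3_3 _ _ _) (span3_2 _ _ _) (span3_1 _ _ _). Qed.

Lemma lin_indep3_comb3 (u1 u2 u3 v1 v2 v3 : V) a1 b1 c1 a2 b2 c2 a3 b3 c3 :
  v1 = comb3 u1 u2 u3 a1 b1 c1 -> v2 = comb3 u1 u2 u3 a2 b2 c2 ->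
  v3 = comb3 u1 u2 u3 a3 b3 c3 ->
  (forall a b c, a * a1 + b * a2 + c * a3 = 0 -> a * b1 + b * b2 + c * b3 = 0 ->
                 a * c1 + b * c2 + c * c3 = 0 -> [/\ a = 0, b = 0 & c = 0]) ->
  lin_indep3 u1 u2 u3 -> lin_indep3 v1 v2 v3.
Proof.
move=> h1 h2 h3 coef hind a b c.
by rewrite -/(comb3 v1 v2 v3 a b c) (comb3_subst _ _ _ h1 h2 h3) => /hind[]; exact: coef.
Qed.

Lemma lin_indep3_perm12 (u1 u2 u3 : V) : lin_indep3 u1 u2 u3 -> lin_indep3 u2 u1 u3.
Proof. by move=> hind a b c; rewrite (addrC (a *: u2)) => /hind[-> -> ->]. Qed.

Lemma lin_indep3_perm13 (u1 u2 u3 : V) : lin_indep3 u1 u2 u3 -> lin_indep3 u3 u2 u1.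
Proof.
by move=> hind a b c; rewrite addrC (addrC (a *: u3)) addrA => /hind[-> -> ->].
Qed.

Lemma lin_indep3_perm23 (u1 u2 u3 : V) : lin_indep3 u1 u2 u3 -> lin_indep3 u1 u3 u2.
Proof. by move=> hind a b c; rewrite addrAC => /hind[-> -> ->]. Qed.

Lemma lin_indep3_neq0 (u1 u2 u3 : V) : lin_indep3 u1 u2 u3 -> u1 != 0.
Proof.
move=> hind; apply/eqP => u10.
have [] := hind 1 0 0; first by rewrite u10 !scale0r scaler0 !addr0.
by move/eqP; rewrite oner_eq0.
Qed.

Lemma not_lin_indep3 (u1 u2 u3 : V) : ~ lin_indep3 u1 u2 u3 ->
  exists a b c, comb3 u1 u2 u3 a b c = 0 /\ ~ [/\ a = 0, b = 0 & c = 0].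
Proof.
move=> hdep; apply: NNPP => hnone; apply: hdep => a b c h0.
by apply: NNPP => hnz; apply: hnone; exists a, b, c.
Qed.

Lemma lin_indep3_exchange (u1 u2 u3 : V) k1 k2 k3 : k1 != 0 ->
  lin_indep3 u1 u2 u3 -> lin_indep3 (comb3 u1 u2 u3 k1 k2 k3) u2 u3.
Proof.
move=> k1n; apply: lin_indep3_comb3 (erefl _) (esym (comb3_010 _ _ _))
  (esym (comb3_001 _ _ _)) _ => a b c.
rewrite !mulr0 !mulr1 !addr0 => /eqP; rewrite mulf_eq0 (negbTE k1n) orbF => /eqP->.
by rewrite !mul0r !add0r => -> ->.
Qed.

Lemma span3_exchange (u1 u2 u3 z : V) k1 k2 k3 : k1 != 0 ->
  span3 u1 u2 u3 z <-> span3 (comb3 u1 u2 u3 k1 k2 k3) u2 u3 z.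
Proof.
move=> k1n; split.
  2: exact: span3_trans (span3_comb3 _ _ _ _ _ _) (span3_2 _ _ _) (span3_3 _ _ _).
apply: span3_trans (span3_2 _ _ _) (span3_3 _ _ _).
exists k1^-1, (- (k2 / k1)), (- (k3 / k1)); rewrite -/(comb3 _ _ _ _ _ _).
rewrite (comb3_subst _ _ _ (erefl _) (esym (comb3_010 _ _ _)) (esym (comb3_001 _ _ _))).
by rewrite -{1}(comb3_100 u1 u2 u3); congr comb3; field.
Qed.

Lemma exists_basis3_with (u1 u2 u3 v : V) : v != 0 -> lin_indep3 u1 u2 u3 ->
  span3 u1 u2 u3 v ->
  exists x y, lin_indep3 v x y /\ forall z, span3 u1 u2 u3 z <-> span3 v x y z.
Proof.
move=> vn hind /span3P[k1 [k2 [k3 hv]]].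
have [k10|k1n] := eqVneq k1 0; last first.
  exists u2, u3; rewrite hv; split; first exact: lin_indep3_exchange.
  by move=> z; apply: span3_exchange.
have [k20|k2n] := eqVneq k2 0; last first.
  have hv' : v = comb3 u2 u1 u3 k2 k1 k3 by rewrite hv /comb3 (addrC (k1 *: u1)).
  exists u1, u3; rewrite hv'; split; first exact/lin_indep3_exchange/lin_indep3_perm12.
  by move=> z; rewrite -span3_exchange //; split=> /span3_perm12.
have [k30|k3n] := eqVneq k3 0; last first.
  have hv' : v = comb3 u3 u2 u1 k3 k2 k1.
    by rewrite hv /comb3 addrC (addrC (k1 *: u1)) addrA.
  exists u2, u1; rewrite hv'; split; first exact/lin_indep3_exchange/lin_indep3_perm13.
  by move=> z; rewrite -span3_exchange //; split=> /span3_perm13.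
by move: vn; rewrite hv k10 k20 k30 comb30 eqxx.
Qed.

Lemma span3_of_rel (u1 u2 u3 : V) r s t :
  comb3 u1 u2 u3 r s t = 0 -> t != 0 -> span3 u1 u2 u2 u3.
Proof.
move=> rel tn; exists (- (r / t)), (- (s / t)), 0.
apply: (scalerI tn); rewrite -/(comb3 _ _ _ _ _ _) comb3Z.
have -> : t *: u3 = comb3 u1 u2 u2 (- r) (- s) 0.
  move/eqP: rel; rewrite /comb3 addrC addr_eq0 => /eqP->.
  by rewrite scale0r addr0 opprD !scaleNr.
by congr comb3; field.
Qed.

End Comb3.

(* The three hypotheses say that (a e + b x + c y)(a' e + b' x + c' y) = 0 in the
   algebra with basis e, x, y and table x^2 = -p, y^2 = -q, xy = al + be x,
   yx = al - be x; the conclusion is that the x-coordinate of the reversed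
   product vanishes. *)
Lemma reversible_pure_table (F : fieldType) (p q al be : F) :
  2%:R != 0 :> F ->
  (forall a b c a' b' c',
     a * a' - p * b * b' + al * (b * c' + c * b') - q * c * c' = 0 ->
     a * b' + b * a' + be * (b * c' - c * b') = 0 ->
     a * c' + c * a' = 0 ->
     a' * b + b' * a + be * (b' * c - c' * b) = 0) ->
  be = 0.
Proof.
move=> two rev; have [//|ben] := eqVneq be 0.
have cancel2be z : 2%:R * be * z = 0 -> z = 0.
  by move/eqP; rewrite !mulf_eq0 (negbTE two) (negbTE ben) => /eqP.
have p0 : p = 0.
  have E := rev 0 1 0 (be * p) (- al) (- p) ltac:(ring) ltac:(ring) ltac:(ring).
  by apply: cancel2be; rewrite -E; ring.
subst p.
have q_eq : q = - (be * be).
  have E := rev be 0 1 (- al * be) (be * be + q) al ltac:(ring) ltac:(ring) ltac:(ring).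
  by apply/eqP; rewrite -addr_eq0 addrC; apply/eqP/cancel2be; rewrite -E; ring.
subst q.
have al0 : al = 0.
  have E := rev be 1 1 (- al * be) (- al) al ltac:(ring) ltac:(ring) ltac:(ring).
  have /cancel2be : 2%:R * be * (2%:R * al) = 0 by rewrite -oppr0 -E; ring.
  by move/eqP; rewrite mulf_eq0 (negbTE two) => /eqP.
subst al.
have E := rev 0 1 0 be 0 (- 1) ltac:(ring) ltac:(ring) ltac:(ring).
have /cancel2be/eqP : 2%:R * be * 1 = 0 by rewrite -E; ring.
by rewrite oner_eq0.
Qed.

Section InvolutiveAlgebra.
Variables (F : fieldType) (V : lmodType F) (m : V -> V -> V).
Hypothesis bil : bilinear_mul m.

Lemma mDl u v w : m (u + v) w = m u w + m v w.
Proof. by case: bil => h _; rewrite -[u]scale1r h !scale1r. Qed.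

Lemma mDr u v w : m w (u + v) = m w u + m w v.
Proof. by case: bil => _ h; rewrite -[u]scale1r h !scale1r. Qed.

Lemma m0l w : m 0 w = 0.
Proof. by apply: (addrI (m 0 w)); rewrite -mDl !addr0. Qed.

Lemma m0r w : m w 0 = 0.
Proof. by apply: (addrI (m w 0)); rewrite -mDr !addr0. Qed.

Lemma mZl a u w : m (a *: u) w = a *: m u w.
Proof. by case: bil => h _; have := h a u 0 w; rewrite !addr0 m0l addr0. Qed.

Lemma mZr a u w : m w (a *: u) = a *: m w u.
Proof. by case: bil => _ h; have := h a u 0 w; rewrite !addr0 m0r addr0. Qed.

Lemma mNl u w : m (- u) w = - m u w.
Proof. by rewrite -scaleN1r mZl scaleN1r. Qed.

Lemma mNr u w : m w (- u) = - m w u.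
Proof. by rewrite -scaleN1r mZr scaleN1r. Qed.

Lemma comm_span3 u v1 v2 v3 z :
  m u v1 = m v1 u -> m u v2 = m v2 u -> m u v3 = m v3 u ->
  span3 v1 v2 v3 z -> m u z = m z u.
Proof. by move=> h1 h2 h3 [a [b [c ->]]]; rewrite !mDl !mDr !mZl !mZr h1 h2 h3. Qed.

Variable e : V.
Hypothesis unit_e : unit_elt m e.

Lemma m1l x : m e x = x. Proof. by case: (unit_e x). Qed.
Lemma m1r x : m x e = x. Proof. by case: (unit_e x). Qed.

Lemma mul_comb3 x y p1 p2 p3 q1 q2 q3 r1 r2 r3 s1 s2 s3 :
  m x x = comb3 e x y p1 p2 p3 -> m x y = comb3 e x y q1 q2 q3 ->
  m y x = comb3 e x y r1 r2 r3 -> m y y = comb3 e x y s1 s2 s3 ->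
  forall a b c a' b' c',
  m (comb3 e x y a b c) (comb3 e x y a' b' c') =
  comb3 e x y
    (a * a' + b * b' * p1 + b * c' * q1 + c * b' * r1 + c * c' * s1)
    (a * b' + b * a' + b * b' * p2 + b * c' * q2 + c * b' * r2 + c * c' * s2)
    (a * c' + c * a' + b * b' * p3 + b * c' * q3 + c * b' * r3 + c * c' * s3).
Proof.
move=> hxx hxy hyx hyy a b c a' b' c'.
have hee : m e e = comb3 e x y 1 0 0 by rewrite m1l comb3_100.
have hex : m e x = comb3 e x y 0 1 0 by rewrite m1l comb3_010.
have hey : m e y = comb3 e x y 0 0 1 by rewrite m1l comb3_001.
have hxe : m x e = comb3 e x y 0 1 0 by rewrite m1r comb3_010.
have hye : m y e = comb3 e x y 0 0 1 by rewrite m1r comb3_001.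
rewrite {1 2}/comb3 !mDl !mDr !mZl !mZr hee hex hey hxe hye hxx hxy hyx hyy.
by rewrite !comb3Z !comb3D; congr comb3; ring.
Qed.

Lemma span3_mul_closed x y :
  span3 e x y (m x x) -> span3 e x y (m x y) -> span3 e x y (m y x) ->
  span3 e x y (m y y) ->
  forall z1 z2, span3 e x y z1 -> span3 e x y z2 -> span3 e x y (m z1 z2).
Proof.
move=> /span3P[p1 [p2 [p3 hxx]]] /span3P[q1 [q2 [q3 hxy]]].
move=> /span3P[r1 [r2 [r3 hyx]]] /span3P[s1 [s2 [s3 hyy]]].
move=> _ _ /span3P[a [b [c ->]]] /span3P[a' [b' [c' ->]]].
by rewrite (mul_comb3 hxx hxy hyx hyy); apply: span3_comb3.
Qed.

Lemma commutative_on_span3 x y : m x y = m y x -> commutative_on m (span3 e x y).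
Proof.
move=> cxy z1 z2 hz1 hz2.
have ce u : m u e = m e u by rewrite m1l m1r.
have cx := comm_span3 (ce x) (erefl _) cxy hz1.
have cy := comm_span3 (ce y) (esym cxy) (erefl _) hz1.
exact: comm_span3 (ce z1) (esym cx) (esym cy) hz2.
Qed.

Variable bar : V -> V.
Hypothesis inv : involutive_alg m e bar.

Lemma barD u v : bar (u + v) = bar u + bar v.
Proof. by case: inv => h _ _ _ _; rewrite -[u]scale1r h !scale1r. Qed.

Lemma bar0 : bar 0 = 0.
Proof. by apply: (addrI (bar 0)); rewrite -barD !addr0. Qed.

Lemma barZ a u : bar (a *: u) = a *: bar u.
Proof. by case: inv => h _ _ _ _; have := h a u 0; rewrite !addr0 bar0 addr0. Qed.

Lemma barN u : bar (- u) = - bar u.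
Proof. by rewrite -scaleN1r barZ scaleN1r. Qed.

Lemma barK u : bar (bar u) = u.
Proof. by case: inv. Qed.

Lemma bar_mul u v : bar (m u v) = m (bar v) (bar u).
Proof. by case: inv. Qed.

Lemma bar_e : bar e = e.
Proof.
have bar_e_l z : m (bar e) z = z by rewrite -{1}(barK z) -bar_mul m1r barK.
by rewrite -[bar e]m1r bar_e_l.
Qed.

Lemma bar_trace x : exists t, bar x = t *: e - x.
Proof.
case: inv => _ _ _ htr _; have [t ht] := htr x.
by exists t; rewrite -ht addrAC subrr add0r.
Qed.

Lemma mul_sqr x t : bar x = t *: e - x -> exists n, m x x = t *: x - n *: e.
Proof.
move=> ht; case: inv => _ _ _ _ hnr; have [n hn] := hnr x.
exists n; move: hn; rewrite ht mDr mNr mZr m1r => <-.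
by rewrite opprB addrC subrK.
Qed.

Lemma sub_bar_pure x : bar (x - bar x) = - (x - bar x).
Proof. by rewrite barD barN barK opprB. Qed.

Lemma pure_sqr x : e != 0 -> bar x = - x -> exists n, m x x = - (n *: e).
Proof.
move=> en px; have [t ht] := bar_trace x.
have : t *: e = 0 by rewrite -[t *: e](subrK x) -ht px addNr.
move/eqP; rewrite scaler_eq0 (negbTE en) orbF => /eqP t0.
by have [n ->] := mul_sqr ht; exists n; rewrite t0 scale0r sub0r.
Qed.

Lemma bar_comb3_pure x y a b c : bar x = - x -> bar y = - y ->
  bar (comb3 e x y a b c) = comb3 e x y a (- b) (- c).
Proof. by move=> px py; rewrite /comb3 !barD !barZ bar_e px py !scalerN !scaleNr. Qed.

Lemma mul_pure_swap x y : bar x = - x -> bar y = - y -> m y x = bar (m x y).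
Proof. by move=> px py; rewrite bar_mul px py mNl mNr opprK. Qed.

Hypothesis two_neq0 : 2%:R != 0 :> F.

Lemma pure_basis3 x0 y0 : lin_indep3 e x0 y0 ->
  lin_indep3 e (x0 - bar x0) (y0 - bar y0) /\
  forall z, span3 e x0 y0 z <-> span3 e (x0 - bar x0) (y0 - bar y0) z.
Proof.
move=> hind; have [t ht] := bar_trace x0; have [s hs] := bar_trace y0.
have Ex : x0 - bar x0 = comb3 e x0 y0 (- t) 2%:R 0.
  by rewrite ht opprB /comb3 scale0r addr0 scaleNr scaler_nat mulr2n addrA addrC.
have Ey : y0 - bar y0 = comb3 e x0 y0 (- s) 0 2%:R.
  by rewrite hs opprB /comb3 scale0r addr0 scaleNr scaler_nat mulr2n addrA addrC.
split.
  apply: lin_indep3_comb3 (esym (comb3_100 _ _ _)) Ex Ey _ hind => a b c.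
  rewrite !mulr0 !mulr1 !addr0 !add0r => + /eqP + /eqP.
  rewrite !mulf_eq0 (negbTE two_neq0) !orbF => + /eqP b0 /eqP c0.
  by rewrite b0 c0 !mul0r !addr0.
have E1 := esym (comb3_100 e x0 y0).
move=> z; split.
  2: by apply: span3_trans (span3_1 _ _ _) _ _; rewrite ?Ex ?Ey; apply: span3_comb3.
apply: span3_trans (span3_1 _ _ _) _ _.
  exists (t / 2%:R), 2%:R^-1, 0.
  rewrite -/(comb3 _ _ _ _ _ _) (comb3_subst _ _ _ E1 Ex Ey).
  by rewrite -{1}(comb3_010 e x0 y0); congr comb3; field.
exists (s / 2%:R), 0, 2%:R^-1.
rewrite -/(comb3 _ _ _ _ _ _) (comb3_subst _ _ _ E1 Ex Ey).
by rewrite -{1}(comb3_001 e x0 y0); congr comb3; field.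
Qed.

Lemma reversible_of_comm3 :
  (forall u1 u2 u3, subalgebra3 m e u1 u2 u3 -> commutative_on m (span3 u1 u2 u3)) ->
  reversible m.
Proof.
move=> comm3 a b hab; have ce u : m u e = m e u by rewrite m1l m1r.
case: (classic (lin_indep3 e a b)) => [hind|/not_lin_indep3[r [s [t [rel nz]]]]].
  suff sub : subalgebra3 m e e a b.
    by rewrite -(comm3 _ _ _ sub _ _ (span3_2 _ _ _) (span3_3 _ _ _)).
  have [ta hta] := bar_trace a; have [na haa] := mul_sqr hta.
  have [tb htb] := bar_trace b; have [nb hbb] := mul_sqr htb.
  have [tab htab] := bar_trace (a + b); have [nab hsq] := mul_sqr htab.
  have {}haa : m a a = comb3 e a b (- na) ta 0.
    by rewrite haa /comb3 scale0r addr0 scaleNr addrC.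
  have {}hbb : m b b = comb3 e a b (- nb) 0 tb.
    by rewrite hbb /comb3 scale0r addr0 scaleNr addrC.
  have hba : m b a = comb3 e a b (na + nb - nab) (tab - ta) (tab - tb).
    rewrite mDl !mDr hab addr0 in hsq.
    have -> : m b a = tab *: (a + b) - nab *: e - m a a - m b b.
      by rewrite -hsq [m a a + _]addrC !addrK.
    have -> : tab *: (a + b) = comb3 e a b 0 tab tab by rewrite /comb3 scale0r add0r scalerDr.
    have -> : nab *: e = comb3 e a b nab 0 0 by rewrite /comb3 !scale0r !addr0.
    by rewrite haa hbb !comb3N !comb3D; congr comb3; ring.
  split=> //; first exact: span3_1.
  apply: span3_mul_closed; rewrite ?haa ?hbb ?hba ?hab -?(comb30 e a b); exact: span3_comb3.
have [tn|] := boolP (t != 0).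
  by rewrite -(comm_span3 (ce a) (erefl _) (erefl _) (span3_of_rel rel tn)).
rewrite negbK => /eqP t0.
have [sn|] := boolP (s != 0).
  have rel' : comb3 e e a r 0 s = 0 by rewrite -rel t0 /comb3 !scale0r !addr0.
  by rewrite (comm_span3 (ce b) (ce b) (ce b) (span3_of_rel rel' sn)).
rewrite negbK => /eqP s0.
have rn : r != 0 by apply/eqP => r0; apply: nz.
have /eqP : r *: e = 0 by rewrite -rel s0 t0 /comb3 !scale0r !addr0.
rewrite scaler_eq0 (negbTE rn) /= => /eqP e0.
by rewrite -(m1l b) e0 !m0l.
Qed.

Hypothesis rev : reversible m.

Lemma pure_mul_skew0 x y al be : lin_indep3 e x y -> bar x = - x -> bar y = - y ->
  m x y = comb3 e x y al be 0 -> be = 0.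
Proof.
move=> hind px py hxy; have en := lin_indep3_neq0 hind.
have [p hp] := pure_sqr en px; have [q hq] := pure_sqr en py.
have hxx : m x x = comb3 e x y (- p) 0 0 by rewrite hp /comb3 !scale0r !addr0 scaleNr.
have hyy : m y y = comb3 e x y (- q) 0 0 by rewrite hq /comb3 !scale0r !addr0 scaleNr.
have hyx : m y x = comb3 e x y al (- be) 0.
  by rewrite mul_pure_swap // hxy bar_comb3_pure // oppr0.
apply: (@reversible_pure_table _ p q al be two_neq0) => a b c a' b' c' E1 E2 E3.
have uv0 : m (comb3 e x y a b c) (comb3 e x y a' b' c') = 0.
  rewrite (mul_comb3 hxx hxy hyx hyy) -(comb30 e x y).
  by congr comb3; [apply: (etrans _ E1) | apply: (etrans _ E2) | apply: (etrans _ E3)]; ring.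
have := rev uv0; rewrite (mul_comb3 hxx hxy hyx hyy) => /hind[_ E2r _].
by rewrite -E2r; ring.
Qed.

Lemma pure_mul_comm x y : lin_indep3 e x y -> bar x = - x -> bar y = - y ->
  span3 e x y (m x y) -> m x y = m y x.
Proof.
move=> hind px py /span3P[al [be [ga hxy]]]; have en := lin_indep3_neq0 hind.
have [p hp] := pure_sqr en px; have [q hq] := pure_sqr en py.
have hxx : m x x = comb3 e x y (- p) 0 0 by rewrite hp /comb3 !scale0r !addr0 scaleNr.
have hyy : m y y = comb3 e x y (- q) 0 0 by rewrite hq /comb3 !scale0r !addr0 scaleNr.
have hyx : m y x = comb3 e x y al (- be) (- ga).
  by rewrite mul_pure_swap // hxy bar_comb3_pure.
have be0 : be = 0.
  have [//|ben] := eqVneq be 0.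
  have ind' : lin_indep3 e (comb3 e x y 0 be ga) y.
    apply: lin_indep3_comb3 (esym (comb3_100 _ _ _)) (erefl _)
      (esym (comb3_001 _ _ _)) _ hind.
    move=> a b c; rewrite !mulr0 !mulr1 !addr0 !add0r => -> /eqP.
    by rewrite mulf_eq0 (negbTE ben) orbF => /eqP->; rewrite mul0r add0r => ->.
  have px' : bar (comb3 e x y 0 be ga) = - comb3 e x y 0 be ga.
    by rewrite bar_comb3_pure // comb3N oppr0.
  have hx'y : m (comb3 e x y 0 be ga) y =
              comb3 e (comb3 e x y 0 be ga) y (al * be - ga * q) be 0.
    rewrite -{2}(comb3_001 e x y) (mul_comb3 hxx hxy hyx hyy).
    rewrite (comb3_subst _ _ _ (esym (comb3_100 e x y)) (erefl _) (esym (comb3_001 e x y))).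
    by congr comb3; ring.
  by rewrite (pure_mul_skew0 ind' px' py hx'y) eqxx in ben.
have ga0 : ga = 0.
  have hyx' : m y x = comb3 e y x al (- ga) 0 by rewrite hyx be0 oppr0 /comb3 addrAC.
  apply/eqP; rewrite -oppr_eq0; apply/eqP.
  exact: pure_mul_skew0 (lin_indep3_perm23 hind) py px hyx'.
by rewrite hxy hyx be0 ga0 oppr0.
Qed.

Lemma comm3_of_reversible u1 u2 u3 :
  subalgebra3 m e u1 u2 u3 -> commutative_on m (span3 u1 u2 u3).
Proof.
case=> hind he hcl.
have en : e != 0.
  by apply/eqP => e0; move: (lin_indep3_neq0 hind); rewrite -(m1l u1) e0 m0l eqxx.
have [x0 [y0 [ind0 span0]]] := exists_basis3_with en hind he.
have [ind span_xy] := pure_basis3 ind0.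
have S z : span3 u1 u2 u3 z <-> span3 e (x0 - bar x0) (y0 - bar y0) z.
  by rewrite span0 span_xy.
have cxy := pure_mul_comm ind (sub_bar_pure x0) (sub_bar_pure y0)
  (iffLR (S _) (hcl _ _ (iffRL (S _) (span3_2 _ _ _)) (iffRL (S _) (span3_3 _ _ _)))).
by move=> z1 z2 /S h1 /S h2; apply: commutative_on_span3 cxy _ _ h1 h2.
Qed.

End InvolutiveAlgebra.

Theorem proposition4p9 (F : fieldType) (V : lmodType F)
    (m : V -> V -> V) (e : V) (bar : V -> V) :
  (2%:R : F) != 0 ->
  bilinear_mul m -> unit_elt m e -> involutive_alg m e bar ->
  (reversible m <->
   forall u1 u2 u3 : V, subalgebra3 m e u1 u2 u3 ->
     commutative_on m (span3 u1 u2 u3)).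
Proof.
move=> two bil unit_e inv; split.
  exact: (comm3_of_reversible bil unit_e inv two).
exact: (reversible_of_comm3 bil unit_e inv).
Qed.
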